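(* Let $R$ be a commutative ring endowed with a translation-invariant partial order $\le$ on its additive group such that $R^+$ is closed under multiplication. If $R$ is archimedean and localizable, then $r^2\in R^+$ for all $r\in R$ (so $R$ is a partially ordered commutative ring).
   Context: Rings are commutative with unit $1$; $\mathbb{N}=\{1,2,\dots\}$. Translation-invariant means $r\le s$ implies $r+t\le s+t$; $R^+=\{r:0\le r\}$. A partially ordered commutative ring is such a ring whose positive cone is closed under multiplication and contains all squares. $R$ is archimedean if whenever $g,h\in R$ satisfy $kg+h\in R^+$ for all $k\in\mathbb{N}$, then $g\in R^+$. $\mathrm{Loc}(R)$ is the set of $s\in 1+R^+$ such that for all $r\in R$, $rs\in R^+$ implies $r\in R^+$. $R$ is localizable if for every $r\in R$ there exists $s\in\mathrm{Loc}(R)$ with $-s\le r\le s$. *)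

From mathcomp Require Import all_boot all_algebra.
Set Implicit Arguments. Unset Strict Implicit. Unset Printing Implicit Defensive.
Import GRing.Theory.
Local Open Scope ring_scope.

Section Defs.
Variable R : comPzRingType.
Variable le : R -> R -> Prop.

Definition partial_order : Prop :=
  (forall x, le x x) /\
  (forall x y, le x y -> le y x -> x = y) /\
  (forall x y z, le x y -> le y z -> le x z).

Definition translation_invariant : Prop :=
  forall r s t, le r s -> le (r + t) (s + t).

Definition pos_cone (r : R) : Prop := le 0 r.

Definition pos_mul_closed : Prop :=
  forall r s, pos_cone r -> pos_cone s -> pos_cone (r * s).

Definition archimedean : Prop :=
  forall g h : R, (forall k : nat, (0 < k)%N -> pos_cone (g *+ k + h)) ->
    pos_cone g.

Definition Loc (s : R) : Prop :=
  pos_cone (s - 1) /\ (forall r : R, pos_cone (r * s) -> pos_cone r).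

Definition localizable : Prop :=
  forall r : R, exists s : R, Loc s /\ le (- s) r /\ le r s.
End Defs.

(* Choose s in Loc(R) with -s <= r <= s, so that a := s + r and b := s - r are
   positive.  The second moment of the ±1 random walk of length N with step
   weights a and b is a positive combination of monomials a^j b^(N-j) with
   square integer coefficients, hence positive; computed in closed form it
   equals N 2^N ((N - 1) r^2 + s^2) s^(N-2).  Archimedeanity removes the factor
   N 2^N, the defining property of Loc(R) removes s^(N-2), and since
   k r^2 + s^2 is then positive for every k, archimedeanity gives r^2 >= 0. *)

From mathcomp Require Import all_boot all_algebra.
From mathcomp Require Import ring.
Local Open Scope ring_scope.
Import GRing.Theory.
Set Implicit Arguments. Unset Strict Implicit.

Section RandomWalk.
Variables (R : comPzRingType) (a b : R).

(* Sum over the ±1 paths of length N started at c of a^#up b^#down times the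
   square of the endpoint. *)
Fixpoint walk2 (N : nat) (c : int) : R :=
  if N is N'.+1 then a * walk2 N' (c + 1) + b * walk2 N' (c - 1)
  else c%:~R ^+ 2.

Lemma walk2S N c : walk2 N.+1 c = a * walk2 N (c + 1) + b * walk2 N (c - 1).
Proof. by []. Qed.

Lemma walk2_closed N c :
  walk2 N.+2 c =
    ((N.+2 * N.+1)%:R * (a - b) ^+ 2 + 2 * c%:~R * N.+2%:R * (a - b) * (a + b))
      * (a + b) ^+ N
    + (N.+2%:R + c%:~R ^+ 2) * (a + b) ^+ N.+2.
Proof.
elim: N c => [|N IH] c; first by rewrite /=; ring.
by rewrite walk2S !IH !exprS; ring.
Qed.

End RandomWalk.

Lemma walk2_center (R : comPzRingType) (r s : R) n :
  walk2 (s + r) (s - r) n.+2 0 =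
    ((r ^+ 2 *+ n.+1 + s ^+ 2) * s ^+ n) *+ (n.+2 * 2 ^ n.+2).
Proof.
rewrite walk2_closed -[RHS]mulr_natr [in RHS]natrM natrX.
have -> : s + r + (s - r) = 2 * s by ring.
by rewrite !exprMn !exprS; ring.
Qed.

Section PositiveCone.
Variables (R : comPzRingType) (le : R -> R -> Prop).
Hypotheses (le_po : partial_order le) (le_addr : translation_invariant le).
Local Notation pos := (pos_cone le).

Lemma subr_pos x y : pos (y - x) <-> le x y.
Proof.
split=> [/(le_addr x)|/(le_addr (- x))]; first by rewrite add0r subrK.
by rewrite subrr.
Qed.

Lemma addr_pos x y : pos x -> pos y -> pos (x + y).
Proof.
case: le_po => _ [_ le_trans] x0 y0; apply: le_trans y0 _.
by have := le_addr y x0; rewrite add0r.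
Qed.

Lemma mulrn_pos x n : pos x -> pos (x *+ n).
Proof.
move=> x0; elim: n => [|n IHn]; last by rewrite mulrS; apply: addr_pos.
by rewrite mulr0n; case: le_po => le_refl _; apply: le_refl.
Qed.

Lemma sqr_intr_pos (c : int) : pos 1 -> pos (c%:~R ^+ 2).
Proof.
move=> one_pos; case: c => n.
  by rewrite -[_%:~R]/(n%:R) -natrX; apply: mulrn_pos.
by rewrite -[_%:~R]/(- n.+1%:R) sqrrN -natrX; apply: mulrn_pos.
Qed.

Lemma walk2_pos (mul_pos : pos_mul_closed le) (one_pos : pos 1) a b N c :
  pos a -> pos b -> pos (walk2 a b N c).
Proof.
move=> a0 b0; elim: N c => [|N IHN] c; first exact: sqr_intr_pos.
by rewrite walk2S; apply: addr_pos; apply: mul_pos.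
Qed.

Lemma mulrn_pos_cancel (le_archi : archimedean le) x s n :
  (0 < n)%N -> pos s -> pos (s + x) -> pos (x *+ n) -> pos x.
Proof.
move=> n_gt0 s0 sx0 xn0; apply: (le_archi _ (s *+ n)) => k _.
have m_le_n : (k %% n <= n)%N by rewrite ltnW ?ltn_mod.
have -> : x *+ k + s *+ n =
    (x *+ n) *+ (k %/ n) + (s + x) *+ (k %% n) + s *+ (n - k %% n).
  by rewrite -[in s *+ n](subnKC m_le_n) [in x *+ k](divn_eq k n); ring.
by do 2?apply: addr_pos; apply: mulrn_pos.
Qed.

Lemma localizable_one_pos : localizable le -> pos 1.
Proof. by case/(_ 0) => s [[_ Ls] [_ s0]]; apply: Ls; rewrite mul1r. Qed.

Lemma Loc_pos s : pos 1 -> Loc le s -> pos s.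
Proof. by move=> one_pos [s1 _]; rewrite -(subrK 1 s); apply: addr_pos. Qed.

Lemma Loc_expr_cancel s x n : Loc le s -> pos (x * s ^+ n) -> pos x.
Proof.
move=> [_ Ls]; elim: n x => [|n IHn] x; first by rewrite mulr1.
by rewrite exprSr mulrA => /Ls /IHn.
Qed.

Lemma localizable_bound (le_loc : localizable le) r :
  exists s, [/\ Loc le s, pos (s + r) & pos (s - r)].
Proof.
have [s [Ls [Nsr rs]]] := le_loc r; exists s; split=> //; last exact/subr_pos.
by move/subr_pos: Nsr; rewrite opprK addrC.
Qed.

End PositiveCone.

Section SquaresArePositive.
Variables (R : comPzRingType) (le : R -> R -> Prop).
Hypotheses (le_po : partial_order le) (le_addr : translation_invariant le).
Hypotheses (mul_pos : pos_mul_closed le) (le_archi : archimedean le).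
Hypothesis le_loc : localizable le.
Local Notation pos := (pos_cone le).

Lemma sqr_mulrn_addr_pos r s n :
  Loc le s -> pos (s + r) -> pos (s - r) -> pos (r ^+ 2 *+ n.+1 + s ^+ 2).
Proof.
move=> Ls a0 b0; apply: (Loc_expr_cancel (n := n) Ls).
have one_pos := localizable_one_pos le_loc.
set x := (r ^+ 2 *+ n.+1 + s ^+ 2) * s ^+ n.
have [t [Lt tx _]] := localizable_bound le_addr le_loc x.
have t0 := Loc_pos le_po le_addr one_pos Lt.
apply: (mulrn_pos_cancel le_po le_addr le_archi (n := n.+2 * 2 ^ n.+2) _ t0 tx).
  by rewrite muln_gt0 expn_gt0.
by rewrite -walk2_center; apply: walk2_pos.
Qed.

End SquaresArePositive.

Theorem proposition4 (R : comPzRingType) (le : R -> R -> Prop) :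
  partial_order le -> translation_invariant le -> pos_mul_closed le ->
  archimedean le -> localizable le ->
  forall r : R, pos_cone le (r ^+ 2).
Proof.
move=> le_po le_addr mul_pos le_archi le_loc r.
have [s [Ls a0 b0]] := localizable_bound le_addr le_loc r.
apply: (le_archi _ (s ^+ 2)) => -[|n] // _.
exact: sqr_mulrn_addr_pos.
Qed.
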